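(* Let $E$, $V$, $T$, $\eta$, $t>1$ and a $(T,E)$-decomposition $(\{W_1,\dots,W_h\},\rho)$ be as in the context, and assume that for every $i$ with $|W_i|>1$, $\sum_{e\in E:\,i\in\rho(e)}\eta(e)\le\beta$, where $\beta=4\eta(E)/t$. Let $F$ be the set of edges $f_{ij}$, over unordered pairs $\{i,j\}$, $i\neq j$, with $\sigma(i,j)$ defined, where $f_{ij}$ has the endpoints of $\sigma(i,j)$ and weight $\omega(i,j)=\sum_{e\in E:\rho(e)=\{i,j\}}w(e)$; set $\rho(f_{ij})=\{i,j\}$. Then for every $i$ with $|W_i|>1$, \[ \sum_{f\in F:\ i\in\rho(f)}\mathrm{st}_T(f)\le\beta. \]
   Context: Weighted edges $w[u,v]$ ($u\ne v$, $w>0$) on a vertex set $V$; $w(e)$ is the weight of $e$; $T$ is a spanning tree on $V$ with positive weights. Resistance of an edge is $1/w$, of a path the sum over its edges; for $e=w[u,v]$, $T(e)$ is the path in $T$ from $u$ to $v$, $\mathrm{st}_T(e)=w\cdot\mathrm{res}(T(e))$, $\eta(e)=\max(\mathrm{st}_T(e),1)$, $\eta(E)=\sum_{e\in E}\eta(e)$. A $(T,E)$-decomposition: sets $W_1,\dots,W_h$ covering $V$, each inducing a subtree of $T$ (possibly a single vertex), pairwise intersecting in at most one vertex, with $\rho$ assigning to each edge $(u,v)\in E$ either $\{i\}$ with $u,v\in W_i$ or $\{i,j\}$ ($i\ne j$) with one endpoint in $W_i$ and the other in $W_j$. For $i\ne j$, $\sigma(i,j)$ is the edge $e\in E$ with $\rho(e)=\{i,j\}$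 maximizing $w(e)/\eta(e)$ (ties broken by a fixed order), undefined if none exists. *)

From mathcomp Require Import all_boot all_order all_algebra.
From Stdlib Require Import ClassicalEpsilon.
Set Implicit Arguments. Unset Strict Implicit. Unset Printing Implicit Defensive.
Import Order.TTheory GRing.Theory Num.Theory.
Local Open Scope ring_scope.

Section Defs.
Variables (R : realFieldType) (V : finType).

(* The spanning tree T is given by a weight function tw on pairs of vertices;
   the tree edges are exactly the pairs {u,v} with tw u v > 0. *)
Definition tadj (tw : V -> V -> R) : rel V := fun u v => 0 < tw u v.

Definition tpath (tw : V -> V -> R) (u v : V) (p : seq V) : bool :=
  [&& path (tadj tw) u p, last u p == v & uniq (u :: p)].

Definition is_spanning_tree (tw : V -> V -> R) : Prop :=
  [/\ forall u v, tw u v = tw v u,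
      forall u v, 0 <= tw u v,
      forall u, tw u u = 0 &
      forall u v, exists! p, tpath tw u v p].

Fixpoint pres (tw : V -> V -> R) (u : V) (p : seq V) : R :=
  match p with
  | [::] => 0
  | x :: q => (tw u x)^-1 + pres tw x q
  end.

(* the path T(u,v) in T (unique when T is a spanning tree) *)
Definition tree_path (tw : V -> V -> R) (u v : V) : seq V :=
  epsilon (inhabits [::]) (fun p => tpath tw u v p).

Definition tres (tw : V -> V -> R) (u v : V) : R := pres tw u (tree_path tw u v).

Definition stretch (tw : V -> V -> R) (wt : R) (u v : V) : R := wt * tres tw u v.

(* (T,E)-decomposition: E is indexed by the finite type I with endpoints
   src, dst and weights w. *)
Definition induces_subtree (tw : V -> V -> R) (W : {set V}) : Prop :=
  W != set0 /\
  forall u v, u \in W -> v \in W ->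
    exists p, tpath tw u v p && all (fun x => x \in W) p.

Definition is_decomposition (tw : V -> V -> R) (I : finType) (src dst : I -> V)
  (h : nat) (W : 'I_h -> {set V}) (rho : I -> {set 'I_h}) : Prop :=
  [/\ (forall x : V, exists i, x \in W i),
      (forall i, induces_subtree tw (W i)),
      (forall i j, i != j -> #|W i :&: W j| <= 1)%N &
      (forall e, (exists i, rho e = [set i] /\ src e \in W i /\ dst e \in W i)
         \/ (exists i j, i != j /\ rho e = [set i; j] /\
               ((src e \in W i /\ dst e \in W j) \/ (src e \in W j /\ dst e \in W i))))].

End Defs.

From mathcomp Require Import all_boot all_order all_algebra.
From mathcomp Require Import ring.
Import Order.TTheory GRing.Theory Num.Theory.
Local Open Scope ring_scope.

(* Within the bundle of edges e' with rho e' = {i,j}, the representative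
   e = sigma(i,j) maximizes w/eta, and w(e) res(T(e)) <= eta(e) by definition of
   eta; so each w(e') res(T(e)) <= eta(e'), and the stretch of the merged edge
   f_ij is at most the eta-mass of its bundle.  The bundles around i are
   disjoint subsets of the edges e with i in rho(e), whence the total is at most
   sum_(i in rho e) eta(e) <= beta. *)

Lemma pres_ge0 (R : realFieldType) (V : finType) (tw : V -> V -> R) :
  (forall u v, 0 <= tw u v) -> forall u p, 0 <= pres tw u p.
Proof.
move=> tw_ge0 u p; elim: p u => [|x p IHp] u //=.
by rewrite addr_ge0 // invr_ge0.
Qed.

Lemma ler_pmul_of_ratio (R : numFieldType) (a b c d r : R) :
  0 < b -> 0 < d -> 0 <= r -> a / b <= c / d -> c * r <= d -> a * r <= b.
Proof.
move=> b_gt0 d_gt0 r_ge0 ab_le_cd cr_le_d.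
have a_le : a <= c / d * b by rewrite -ler_pdivrMr.
have crd_le1 : c * r / d <= 1 by rewrite ler_pdivrMr // mul1r.
apply: le_trans (ler_wpM2r r_ge0 a_le) _.
have -> : c / d * b * r = b * (c * r / d) by ring.
by rewrite -[leRHS]mulr1 ler_wpM2l // ltW.
Qed.

Lemma sum_mul_le_of_max_ratio (R : numFieldType) (I : finType) (P : pred I)
    (w eta : I -> R) (e : I) (r : R) :
  (forall e', 0 < eta e') -> 0 <= r -> w e * r <= eta e ->
  (forall e', P e' -> w e' / eta e' <= w e / eta e) ->
  (\sum_(e' | P e') w e') * r <= \sum_(e' | P e') eta e'.
Proof.
move=> eta_gt0 r_ge0 wr_le e_max; rewrite mulr_suml; apply: ler_sum => e' Pe'.
exact: ler_pmul_of_ratio (eta_gt0 e') (eta_gt0 e) r_ge0 (e_max e' Pe') wr_le.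
Qed.

Lemma set2_inj_r (J : finType) (i j k : J) :
  j != i -> [set i; j] = [set i; k] -> j = k.
Proof.
move=> ji ijk; have : j \in [set i; k] by rewrite -ijk !inE eqxx orbT.
by rewrite !inE (negbTE ji) => /eqP.
Qed.

Lemma sum_set2_bundles_le (R : numDomainType) (I J : finType)
    (rho : I -> {set J}) (F : I -> R) (i : J) :
  (forall e, 0 <= F e) ->
  \sum_(j | j != i) \sum_(e | rho e == [set i; j]) F e
    <= \sum_(e | i \in rho e) F e.
Proof.
move=> F_ge0; rewrite (exchange_big_dep (fun e => i \in rho e)) /=; last first.
  by move=> j e _ /eqP ->; rewrite !inE eqxx.
apply: ler_sum => e _.
pose A := [pred j | (j != i) && (rho e == [set i; j])].
rewrite (eq_bigl [in A]) // sumr_const; have : (#|A| <= 1)%N.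
  apply/card_le1_eqP => j k /andP [_ /eqP rj] /andP [ki /eqP rk].
  by apply: set2_inj_r ki _; rewrite -rk -rj.
by case: #|A| => [|[|]] //= _; rewrite ?F_ge0.
Qed.

Theorem lemma10p2 (R : realFieldType) (V : finType) (I : finType)
  (src dst : I -> V) (w : I -> R) (tw : V -> V -> R) (t : R)
  (h : nat) (W : 'I_h -> {set V}) (rho : I -> {set 'I_h})
  (sigma : 'I_h -> 'I_h -> option I) :
  (forall e, src e != dst e) ->
  (forall e, 0 < w e) ->
  is_spanning_tree tw ->
  is_decomposition tw src dst W rho ->
  1 < t ->
  let eta := fun e => Num.max (stretch tw (w e) (src e) (dst e)) 1 in
  let beta := 4 * (\sum_e eta e) / t in
  (* sigma i j is the edge e with rho e = {i,j} maximizing w(e)/eta(e)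
     (some fixed tie-breaking), or None if no such edge exists *)
  (forall i j, sigma i j = sigma j i) ->
  (forall i j, i != j ->
     match sigma i j with
     | None => forall e, rho e != [set i; j]
     | Some e => rho e = [set i; j] /\
         forall e', rho e' = [set i; j] -> w e' / eta e' <= w e / eta e
     end) ->
  (forall i, (1 < #|W i|)%N -> \sum_(e | i \in rho e) eta e <= beta) ->
  let omega := fun i j => \sum_(e | rho e == [set i; j]) w e in
  forall i, (1 < #|W i|)%N ->
    \sum_(j | j != i)
       (if sigma i j is Some e then stretch tw (omega i j) (src e) (dst e) else 0)
    <= beta.
Proof.
move=> _ _ [_ tw_ge0 _ _] _ _ eta beta _ sigma_spec eta_mass omega i Wi_big.
have eta_ge1 e : 1 <= eta e by rewrite le_max lexx orbT.
have eta_gt0 e : 0 < eta e by apply: lt_le_trans (eta_ge1 e).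
apply: le_trans (eta_mass i Wi_big).
apply: le_trans (@sum_set2_bundles_le _ _ _ rho eta i (fun e => ltW (eta_gt0 e))).
apply: ler_sum => j ji; have := sigma_spec i j; rewrite eq_sym ji.
case: (sigma i j) => [e /(_ isT) [_ e_max]|_]; last first.
  by apply: sumr_ge0 => e _; apply: ltW.
apply: (@sum_mul_le_of_max_ratio _ _ _ w eta e).
- exact: eta_gt0.
- exact: pres_ge0.
- by rewrite /eta /stretch le_max lexx.
- move=> e' /eqP re'; exact: e_max e' re'.
Qed.
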